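(* Let $\eta>0$, $L>0$, $\nu>0$ with $\eta\le L$. Define error functions recursively by a scalar $e_0>0$ and $$e_k(\gamma_0,\dots,\gamma_{k-1})=(1-\eta\gamma_{k-1})\,e_{k-1}(\gamma_0,\dots,\gamma_{k-2})+\gamma_{k-1}^2\nu^2,\qquad k\ge1,$$ where $e_0$ satisfies $\frac{\eta}{2\nu^2}e_0\le\frac1L$. Let $\gamma_0^*=\frac{\eta}{2\nu^2}e_0$ and $\gamma_k^*=\gamma_{k-1}^*\big(1-\frac{\eta}{2}\gamma_{k-1}^*\big)$ for $k\ge1$. Then: (a) $e_k(\gamma_0^*,\dots,\gamma_{k-1}^* )=\frac{2\nu^2}{\eta}\gamma_k^*$ for all $k\ge0$; (b) for each $k\ge1$, $(\gamma_0^*,\dots,\gamma_{k-1}^* )$ minimizes $e_k$ over $\mathbb{G}_k=\{\alpha\in\mathbb{R}^k:0<\alpha_j\le\frac1L,\ j=1,\dots,k\}$; more precisely, for any $k\ge1$ and any $(\gamma_0,\dots,\gamma_{k-1})\in\mathbb{G}_k$, $e_k(\gamma_0,\dots,\gamma_{k-1})-e_k(\gamma_0^*,\dots,\gamma_{k-1}^* )\ge\nu^2(\gamma_{k-1}-\gamma_{k-1}^* )^2$; (c) $(\gamma_0^*,\dots,\gamma_{k-1}^* )$ is a stationary point of $e_k$ over $\mathbb{G}_k$.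
   Context: In the paper, $\eta$ is the strong convexity constant and $L$ the Lipschitz constant of the gradient of the objective $f$ (hence $\eta\le L$), and $\nu^2$ is an upper bound on the conditional second moments $\mathbb{E}[\|w_k\|^2\mid\mathcal{F}_k]$ of the stochastic gradient errors. *)

From Stdlib Require Import Reals Lra Lia.
From Coquelicot Require Import Coquelicot.
Open Scope R_scope.

(* Error recursion e_k(gamma_0,...,gamma_{k-1}); a step-size vector is
   represented by a sequence g : nat -> R of which only g 0 .. g (k-1)
   are used by err ... g k. *)
Fixpoint err (eta nu e0 : R) (g : nat -> R) (k : nat) : R :=
  match k with
  | O => e0
  | S k' => (1 - eta * g k') * err eta nu e0 g k' + (g k') ^ 2 * nu ^ 2
  end.

Fixpoint gstar (eta nu e0 : R) (k : nat) : R :=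
  match k with
  | O => eta / (2 * nu ^ 2) * e0
  | S k' => gstar eta nu e0 k' * (1 - eta / 2 * gstar eta nu e0 k')
  end.

Definition gstar_upd (eta nu e0 : R) (j : nat) (t : R) : nat -> R :=
  fun i => if Nat.eqb i j then t else gstar eta nu e0 i.

(** Write [s] for the optimal schedule.  Its error is [2 nu^2 / eta] times the
    optimal step size, and this proportionality makes the first-order term
    cancel when an arbitrary schedule [g] is compared with [s]:
    [e_(k+1)(g) - e_(k+1)(s) = (1 - eta g_k) (e_k(g) - e_k(s)) + nu^2 (g_k - s_k)^2].
    As long as [eta g_j <= 1], induction on [k] makes the difference nonnegative,
    which gives the lower bound (b).  The same cancellation makes the derivative
    in the last step size vanish at [s], and earlier step sizes only enter
    through a constant multiple of [e_k], which gives (c). *)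
From Stdlib Require Import Reals Lra Lia.
From Coquelicot Require Import Coquelicot.
Open Scope R_scope.

Section OptimalStepSizes.

Variables eta nu e0 : R.

Local Notation err := (err eta nu e0).
Local Notation gstar := (gstar eta nu e0).
Local Notation gstar_upd := (gstar_upd eta nu e0).

Lemma err_ext (g h : nat -> R) (k : nat) :
  (forall i, (i < k)%nat -> g i = h i) -> err g k = err h k.
Proof.
  induction k as [|k IH]; intros Hgh; simpl; [reflexivity|].
  rewrite IH by (intros; apply Hgh; lia).
  rewrite Hgh by lia. reflexivity.
Qed.

Lemma err_gstar_upd_small (j k : nat) (t : R) :
  (k <= j)%nat -> err (gstar_upd j t) k = err gstar k.
Proof.
  intros Hkj. apply err_ext. intros i Hi. unfold gstar_upd.
  destruct (Nat.eqb_spec i j); [lia|reflexivity].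
Qed.

Hypothesis eta_gt0 : 0 < eta.
Hypothesis nu_gt0 : 0 < nu.

Lemma err_gstar (k : nat) : err gstar k = 2 * nu ^ 2 / eta * gstar k.
Proof.
  induction k as [|k IH]; simpl.
  - field. lra.
  - rewrite IH. field. lra.
Qed.

Lemma err_sub_gstar_S (g : nat -> R) (k : nat) :
  err g (S k) - err gstar (S k)
  = (1 - eta * g k) * (err g k - err gstar k) + nu ^ 2 * (g k - gstar k) ^ 2.
Proof.
  simpl. rewrite err_gstar. field. lra.
Qed.

Lemma err_sub_gstar_ge0 (g : nat -> R) (k : nat) :
  (forall j, (j < k)%nat -> eta * g j <= 1) -> 0 <= err g k - err gstar k.
Proof.
  induction k as [|k IH]; intros Hg; [simpl; lra|].
  rewrite err_sub_gstar_S.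
  assert (Hk := Hg k (Nat.lt_succ_diag_r k)).
  assert (Hdiff : 0 <= err g k - err gstar k) by (apply IH; intros; apply Hg; lia).
  assert (0 <= nu ^ 2 * (g k - gstar k) ^ 2) by (apply Rmult_le_pos; apply pow2_ge_0).
  assert (0 <= (1 - eta * g k) * (err g k - err gstar k)) by (apply Rmult_le_pos; lra).
  lra.
Qed.

Lemma err_sub_gstar_ge (g : nat -> R) (k : nat) :
  (forall j, (j <= k)%nat -> eta * g j <= 1) ->
  err g (S k) - err gstar (S k) >= nu ^ 2 * (g k - gstar k) ^ 2.
Proof.
  intros Hg. rewrite err_sub_gstar_S.
  assert (Hk := Hg k (Nat.le_refl k)).
  assert (0 <= err g k - err gstar k) by (apply err_sub_gstar_ge0; intros; apply Hg; lia).
  assert (0 <= (1 - eta * g k) * (err g k - err gstar k)) by (apply Rmult_le_pos; lra).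
  lra.
Qed.

Lemma is_derive_err_gstar_upd (k j : nat) :
  is_derive (fun t => err (gstar_upd j t) k) (gstar j) 0.
Proof.
  induction k as [|k IH]; simpl; [apply (is_derive_const e0)|].
  destruct (Nat.eq_dec k j) as [->|Hkj].
  - apply (is_derive_ext
             (fun t => (1 - eta * t) * err gstar j + t ^ 2 * nu ^ 2)).
    { intros t. rewrite err_gstar_upd_small by lia.
      unfold gstar_upd. rewrite Nat.eqb_refl. reflexivity. }
    rewrite err_gstar. auto_derive; [exact I|]. field. lra.
  - set (c := gstar k).
    assert (Hc : forall t, gstar_upd j t k = c).
    { intros t. unfold gstar_upd. destruct (Nat.eqb_spec k j); [lia|reflexivity]. }
    apply (is_derive_ext
             (fun t => plus ((1 - eta * c) * err (gstar_upd j t) k) (c ^ 2 * nu ^ 2))).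
    { intros t. rewrite Hc. reflexivity. }
    replace 0 with (plus ((1 - eta * c) * 0) (@zero R_NormedModule))
      by (unfold plus, zero; simpl; ring).
    apply (is_derive_plus _ (fun _ => c ^ 2 * nu ^ 2)).
    + apply (is_derive_scal _ _ _ _ IH).
    + apply is_derive_const.
Qed.

End OptimalStepSizes.

Lemma step_le_inv_L (eta L x : R) :
  0 < eta -> eta <= L -> 0 < x <= 1 / L -> eta * x <= 1.
Proof.
  intros He HeL Hx.
  assert (HL : / L <= / eta) by (apply Rinv_le_contravar; lra).
  assert (Hx' : eta * x <= eta * / eta) by (apply Rmult_le_compat_l; lra).
  rewrite Rinv_r in Hx' by lra. exact Hx'.
Qed.

(* [0 < e0] and the bound on [gamma_0^*] only place [gamma^*] in [G_k];
   the three claims hold without them. *)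
Theorem proposition2 (eta L nu e0 : R) :
  0 < eta -> 0 < L -> 0 < nu -> eta <= L -> 0 < e0 ->
  eta / (2 * nu ^ 2) * e0 <= 1 / L ->
  (* (a) *)
  (forall k : nat,
      err eta nu e0 (gstar eta nu e0) k = 2 * nu ^ 2 / eta * gstar eta nu e0 k) /\
  (* (b) *)
  (forall (k : nat) (g : nat -> R), (1 <= k)%nat ->
      (forall j : nat, (j < k)%nat -> 0 < g j <= 1 / L) ->
      err eta nu e0 g k - err eta nu e0 (gstar eta nu e0) k
        >= nu ^ 2 * (g (k - 1)%nat - gstar eta nu e0 (k - 1)%nat) ^ 2) /\
  (* (c) every partial derivative of e_k vanishes at gamma^* *)
  (forall k j : nat, (1 <= k)%nat -> (j < k)%nat ->
      is_derive (fun t => err eta nu e0 (gstar_upd eta nu e0 j t) k)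
                (gstar eta nu e0 j) 0).
Proof.
  intros He _ Hn HeL _ _.
  split; [exact (err_gstar eta nu e0 He Hn)|split].
  - intros [|k] g Hk Hg; [lia|].
    replace (S k - 1)%nat with k by lia.
    apply err_sub_gstar_ge; [exact He|exact Hn|].
    intros j Hj. apply (step_le_inv_L eta L); [exact He|exact HeL|apply Hg; lia].
  - intros k j _ _. exact (is_derive_err_gstar_upd eta nu e0 He Hn k j).
Qed.
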